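(* Let $f\in C^1[0,1]$ with $f(0)=0$, $h:=f'$, $q$ satisfying (q), and fix $c>c^*$. For every $\varphi_0\in(0,1)$ there is a unique $\hat z_{\varphi_0}\in C[0,1]\cap C^1(0,1)$ with $\dot{\hat z}_{\varphi_0}(\varphi)=h(\varphi)-c-q(\varphi)/\hat z_{\varphi_0}(\varphi)$ and $\hat z_{\varphi_0}(\varphi)<0$ for $\varphi\in(0,1)$, and $\hat z_{\varphi_0}(\varphi_0)=z^*(\varphi_0)$. It satisfies $\hat z_{\varphi_0}(0)=0$ (so it solves $(P_c)$), $\hat z_{\varphi_0}<z^*$ on $(\varphi_0,1]$, and $\hat z_{\varphi_0}\ge z_\beta$ on $(0,1]$. Moreover, if $0<\varphi_1<\varphi_0<1$ then $\hat z_{\varphi_1}<\hat z_{\varphi_0}$ on $(0,1]$.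
   Context: Condition (q): $q\in C[0,1]$, $q>0$ on $(0,1)$, $q(0)=q(1)=0$, and $\limsup_{\varphi\to0^+}q(\varphi)/\varphi<+\infty$. For $c\in\mathbb R$, a solution of problem $(P_c)$ is a function $z\in C[0,1]\cap C^1(0,1)$ with $\dot z(\varphi)=h(\varphi)-c-q(\varphi)/z(\varphi)$ and $z(\varphi)<0$ for all $\varphi\in(0,1)$, and $z(0)=0$. $c^*$ denotes the real number such that $(P_c)$ has a solution with $z(1)=0$ iff $c\ge c^*$ (unique); $z^*$ is this solution for $c=c^*$. For $c>c^*$, $\beta(c)<0$ is the number such that, for $b<0$, $(P_c)$ has a solution with $z(1)=b$ iff $b\ge\beta(c)$ (unique); $z_\beta$ denotes the solution of $(P_c)$ with $z_\beta(1)=\beta(c)$. *)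

From Stdlib Require Import Reals.
From Coquelicot Require Import Coquelicot.
Open Scope R_scope.

Definition cont01 (g : R -> R) : Prop :=
  forall x, 0 <= x <= 1 ->
    filterlim g (within (fun y => 0 <= y <= 1) (locally x)) (locally (g x)).

Definition cond_q (q : R -> R) : Prop :=
  cont01 q /\ (forall x, 0 < x < 1 -> 0 < q x) /\ q 0 = 0 /\ q 1 = 0 /\
  (* limsup_{phi -> 0+} q(phi)/phi < +oo *)
  (exists M delta, 0 < delta /\ forall x, 0 < x < delta -> q x / x <= M).

(* z in C[0,1] ∩ C^1(0,1), z' = h - c - q/z and z < 0 on (0,1)
   (the derivative equals a continuous expression, so z is C^1 on (0,1)) *)
Definition ode_sol (h q : R -> R) (c : R) (z : R -> R) : Prop :=
  cont01 z /\
  (forall x, 0 < x < 1 -> z x < 0) /\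
  (forall x, 0 < x < 1 -> is_derive z x (h x - c - q x / z x)).

Definition solP (h q : R -> R) (c : R) (z : R -> R) : Prop :=
  ode_sol h q c z /\ z 0 = 0.

From Stdlib Require Import Reals Lra Lia ClassicalEpsilon Classical.
From Coquelicot Require Import Coquelicot.
Open Scope R_scope.
Set Bullet Behavior "Strict Subproofs".

(* The proof is elementary one-dimensional comparison theory plus a Picard theorem.
   1. Continuity relative to a closed interval ([cont_on]) and two maximum principles:
      a function that is <= 0 at u and has negative derivative at its zeros stays
      negative ([stays_negative]); one with g' <= 0 where g < 0 stays below g(u)
      ([stays_below_start]), hence [nonincreasing].
   2. For negative solutions the gap d = z - w satisfies d' = (c_w - c_z) + q/(z w) d
      ([gap_derive]).  This gives uniqueness ([solutions_agree], via a Gronwall argument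
      [linear_ode_zero]), strict comparison with the slower z* ([strictly_below_slower]:
      a solution through (phi0, z*(phi0)) is above z* on (0, phi0), below it on
      (phi0, 1], hence vanishes at 0), and widening of gaps ([gap_widens]).
   3. Existence: the field is truncated at level -del, made bounded and Lipschitz, and
      solved by Picard iteration ([picard_exists]); for small del the solution never
      reaches the cut-off on (a, 1] ([Trapping]), and the solutions for a -> 0 glue
      into a solution on (0, 1) ([Gluing], [solution_through_zstar]).
   4. The theorem: uniqueness and existence give z^_phi0; comparison with z* gives
      z^(0) = 0 and z^ < z* on (phi0, 1]; solutions are totally ordered
      ([solutions_ordered]), which yields z^ >= z_beta and the monotonicity in phi0. *)

Definition cont_on (g : R -> R) (u v : R) : Prop :=
  forall x, u <= x <= v ->
    filterlim g (within (fun y => u <= y <= v) (locally x)) (locally (g x)).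

Lemma cont_on_eps g u v x : cont_on g u v -> u <= x <= v -> forall eps, 0 < eps ->
  exists d, 0 < d /\ forall y, u <= y <= v -> Rabs (y - x) < d -> Rabs (g y - g x) < eps.
Proof.
  intros H Hx eps He.
  destruct (proj1 (filterlim_locally g (g x)) (H x Hx) (mkposreal eps He)) as [d Hd].
  exists d. split; [apply cond_pos|]. intros y Hy Hyx. exact (Hd y Hyx Hy).
Qed.

Lemma cont_on_of_eps g u v : (forall x, u <= x <= v -> forall eps, 0 < eps ->
  exists d, 0 < d /\ forall y, u <= y <= v -> Rabs (y - x) < d -> Rabs (g y - g x) < eps) ->
  cont_on g u v.
Proof.
  intros H x Hx. apply filterlim_locally. intros eps.
  destruct (H x Hx eps (cond_pos eps)) as [d [Hd Hd2]].
  exists (mkposreal d Hd). intros y Hy Hy2. exact (Hd2 y Hy2 Hy).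
Qed.

Lemma cont_on_sub g u v u' v' : cont_on g u v -> u <= u' -> v' <= v -> cont_on g u' v'.
Proof.
  intros H Hu Hv. apply cont_on_of_eps. intros x Hx eps He.
  destruct (cont_on_eps g u v x H ltac:(lra) eps He) as [d [Hd Hd2]].
  exists d; split; auto. intros y Hy Hyx. apply Hd2; auto; lra.
Qed.

Lemma cont_on_of_continuous g u v : (forall x, u <= x <= v -> continuous g x) -> cont_on g u v.
Proof.
  intros H x Hx. eapply filterlim_filter_le_1; [apply filter_le_within | apply H; auto].
Qed.

Lemma cont_on_plus f g u v : cont_on f u v -> cont_on g u v -> cont_on (fun t => f t + g t) u v.
Proof.
  intros Hf Hg x Hx. eapply filterlim_comp_2; [apply Hf; auto | apply Hg; auto |].
  exact (filterlim_plus (f x) (g x)).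
Qed.

Lemma cont_on_mult f g u v : cont_on f u v -> cont_on g u v -> cont_on (fun t => f t * g t) u v.
Proof.
  intros Hf Hg x Hx. eapply filterlim_comp_2; [apply Hf; auto | apply Hg; auto |].
  exact (@filterlim_mult R_AbsRing (f x) (g x)).
Qed.

Lemma cont_on_const k u v : cont_on (fun _ => k) u v.
Proof. apply cont_on_of_continuous. intros. apply continuous_const. Qed.

Lemma cont_on_id u v : cont_on (fun t => t) u v.
Proof. apply cont_on_of_continuous. intros. apply continuous_id. Qed.

Lemma cont_on_ext f g u v : (forall t, f t = g t) -> cont_on f u v -> cont_on g u v.
Proof. intros He H x Hx. rewrite <- He. apply (filterlim_ext f g); auto. Qed.

Lemma cont_on_minus f g u v : cont_on f u v -> cont_on g u v -> cont_on (fun t => f t - g t) u v.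
Proof.
  intros Hf Hg. apply (cont_on_ext (fun t => f t + -1 * g t)); [intros; ring|].
  apply cont_on_plus; auto. apply cont_on_mult; auto. apply cont_on_const.
Qed.

Lemma derive_plus f g x a b :
  is_derive f x a -> is_derive g x b -> is_derive (fun t => f t + g t) x (a + b).
Proof. intros. apply (is_derive_plus f g); auto. Qed.

Lemma derive_minus f g x a b :
  is_derive f x a -> is_derive g x b -> is_derive (fun t => f t - g t) x (a - b).
Proof. intros. apply (is_derive_minus f g); auto. Qed.

Lemma derive_mult f g x a b :
  is_derive f x a -> is_derive g x b -> is_derive (fun t => f t * g t) x (a * g x + f x * b).
Proof. intros. apply (is_derive_mult f g); auto. intros; apply Rmult_comm. Qed.

Lemma derive_const k x : is_derive (fun _ : R => k) x 0.
Proof. apply (@is_derive_const R_AbsRing R_NormedModule k). Qed.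

Lemma derive_id (x : R) : is_derive (fun t : R => t) x 1.
Proof. apply (@is_derive_id R_AbsRing x). Qed.

Lemma derive_eq (f : R -> R) (x a b : R) : a = b -> is_derive f x a -> is_derive f x b.
Proof. intros ->; auto. Qed.

Lemma derive_reflect (f : R -> R) s l : is_derive f (- s) l -> is_derive (fun s => f (- s)) s (- l).
Proof.
  intros H. apply derive_eq with (scal (-1) l); [unfold scal; simpl; unfold mult; simpl; ring|].
  apply (is_derive_comp f (fun s => - s)); auto.
  exact (@is_derive_opp R_AbsRing R_NormedModule (fun s => s) s 1 (derive_id s)).
Qed.

Lemma derive_continuous (f : R -> R) x l : is_derive f x l -> continuous f x.
Proof. intros H. apply (@ex_derive_continuous R_AbsRing R_NormedModule f). exists l; auto. Qed.

Lemma derive_continuity_pt (f : R -> R) x l : is_derive f x l -> continuity_pt f x.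
Proof. intros H. apply continuity_pt_filterlim. eapply derive_continuous; eauto. Qed.

Lemma cont_on_of_derive (g : R -> R) u v :
  (forall t, u <= t <= v -> exists l, is_derive g t l) -> cont_on g u v.
Proof.
  intros H. apply cont_on_of_continuous. intros t Ht.
  destruct (H t Ht) as [l Hl]. eapply derive_continuous; eauto.
Qed.

Lemma cont_on_bound g u v C x : u < v -> cont_on g u v -> u <= x <= v ->
  (forall y, u < y < v -> g y <= C) -> g x <= C.
Proof.
  intros Huv Hc Hx H. destruct (Rle_or_lt (g x) C) as [|Hlt]; auto.
  destruct (cont_on_eps g u v x Hc Hx (g x - C) ltac:(lra)) as [d [Hd Hd2]].
  assert (Hm1 := Rmin_l d (v - u)). assert (Hm2 := Rmin_r d (v - u)).
  assert (Hm3 : 0 < Rmin d (v - u)) by (apply Rmin_pos; lra).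
  set (y := if Rlt_dec x ((u + v) / 2) then x + Rmin d (v - u) / 4 else x - Rmin d (v - u) / 4).
  assert (Hy : u < y < v /\ Rabs (y - x) < d).
  { unfold y; destruct (Rlt_dec x ((u + v) / 2)).
    - split; [lra | rewrite Rabs_pos_eq; lra].
    - split; [lra | rewrite Rabs_left; lra]. }
  specialize (Hd2 y ltac:(lra) (proj2 Hy)). specialize (H y (proj1 Hy)).
  apply Rabs_def2 in Hd2. lra.
Qed.

Lemma sign_near_zero (g : R -> R) (x l : R) : is_derive g x l -> g x = 0 -> l < 0 ->
  exists eta, 0 < eta /\ (forall r, x < r < x + eta -> g r < 0) /\
                         (forall r, x - eta < r < x -> 0 < g r).
Proof.
  intros Hd H0 Hl. apply is_derive_Reals in Hd.
  destruct (Hd (- l / 2) ltac:(lra)) as [d Hdd].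
  assert (Hquot : forall r, r <> x -> Rabs (r - x) < d -> g r / (r - x) < l / 2).
  { intros r Hr Hrd. specialize (Hdd (r - x) ltac:(intro; apply Hr; lra) Hrd).
    replace (x + (r - x)) with r in Hdd by ring. rewrite H0, Rminus_0_r in Hdd.
    apply Rabs_def2 in Hdd. lra. }
  exists d. split; [apply cond_pos | split].
  - intros r Hr. specialize (Hquot r ltac:(lra) ltac:(rewrite Rabs_pos_eq; lra)).
    replace (g r) with (g r / (r - x) * (r - x)) by (field; lra). nra.
  - intros r Hr. specialize (Hquot r ltac:(lra) ltac:(rewrite Rabs_left; lra)).
    replace (g r) with (g r / (r - x) * (r - x)) by (field; lra). nra.
Qed.

Lemma negative_right_of g u v x : u <= x < v -> cont_on g u v -> g x <= 0 ->
  (g x = 0 -> exists l, l < 0 /\ is_derive g x l) ->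
  exists eta, 0 < eta /\ forall r, x < r < x + eta -> g r < 0.
Proof.
  intros Hx Hc Hgx Hd. destruct (Rlt_or_le (g x) 0) as [Hneg | Hz].
  - destruct (cont_on_eps g u v x Hc ltac:(lra) (- g x) ltac:(lra)) as [d [Hd0 Hd2]].
    assert (Hm1 := Rmin_l d (v - x)). assert (Hm2 := Rmin_r d (v - x)).
    exists (Rmin d (v - x)). split; [apply Rmin_pos; lra|]. intros r Hr.
    specialize (Hd2 r ltac:(lra) ltac:(rewrite Rabs_pos_eq; lra)). apply Rabs_def2 in Hd2. lra.
  - destruct (Hd ltac:(lra)) as [l [Hl Hdl]].
    destruct (sign_near_zero g x l Hdl ltac:(lra) Hl) as [eta [He [Hright _]]]. eauto.
Qed.

(* First zero: if g is continuous on [u, v], negative just right of u, and g(y) >= 0 for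
   some y in (u, v), then g has a first zero t in (u, y]: g(t) = 0 and g < 0 on (u, t).
   The point t is the supremum of the s such that g < 0 on (u, s]. *)
Lemma first_zero (g : R -> R) (u v y eta : R) : u < y < v -> cont_on g u v -> 0 < eta ->
  (forall r, u < r < u + eta -> g r < 0) -> 0 <= g y ->
  exists t, u < t <= y /\ g t = 0 /\ forall r, u < r < t -> g r < 0.
Proof.
  intros Hy Hc He Hstart Hgy.
  set (E := fun s => u <= s <= y /\ forall r, u < r <= s -> g r < 0).
  destruct (completeness E) as [t [Ht1 Ht2]].
  { exists y. intros s [Hs _]. lra. }
  { exists u. split; [lra | intros; lra]. }
  assert (Hty : t <= y) by (apply Ht2; intros s [Hs _]; lra).
  assert (Hbelow : forall r, u < r < t -> g r < 0).
  { intros r Hr. apply NNPP. intros Hn.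
    assert (t <= r); [|lra].
    apply Ht2. intros s [Hs Hs2]. apply Rnot_lt_le. intros Hrs. apply Hn, Hs2. lra. }
  assert (Hpush : forall x eta, u <= x < y -> 0 < eta -> (forall r, u < r <= x -> g r < 0) ->
            (forall r, x < r < x + eta -> g r < 0) -> x < t).
  { intros x eta' Hx He' Hle Hright.
    set (s := Rmin (x + eta' / 2) y).
    assert (Hs1 := Rmin_l (x + eta' / 2) y). assert (Hs2 := Rmin_r (x + eta' / 2) y).
    fold s in Hs1, Hs2.
    assert (Hxs : x < s) by (unfold s; apply Rmin_glb_lt; lra).
    assert (E s); [|assert (s <= t) by (apply Ht1; auto); lra].
    split; [split; lra|]. intros r Hr. destruct (Rle_or_lt r x); [apply Hle; lra | apply Hright; lra]. }
  assert (Hut : u < t) by (apply (Hpush u eta); [lra | exact He | intros; lra | exact Hstart]).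
  assert (Hgt : g t <= 0).
  { apply (cont_on_bound g u t 0 t Hut); [apply (cont_on_sub g u v); auto; lra | lra |].
    intros r Hr; left; auto. }
  exists t. split; [lra | split; [|exact Hbelow]].
  apply Rle_antisym; [exact Hgt|]. apply Rnot_lt_le. intros Hneg.
  assert (Hty' : t < y) by (destruct (Rle_lt_or_eq_dec _ _ Hty) as [|<-]; lra).
  destruct (negative_right_of g u v t ltac:(lra) Hc Hgt ltac:(lra)) as [eta' [He' Heta']].
  assert (t < t); [|lra].
  apply (Hpush t eta'); [lra | exact He' | | exact Heta'].
  intros r Hr. destruct (Req_dec r t) as [->|]; [auto | apply Hbelow; lra].
Qed.

(* First maximum principle: a continuous g with g(u) <= 0 whose derivative is negative
   at each of its zeros in [u, v) stays negative on (u, v): at a first zero, g would be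
   negative on the left, which a negative derivative forbids. *)
Lemma stays_negative (g : R -> R) (u v : R) : u < v -> cont_on g u v -> g u <= 0 ->
  (forall x, u <= x < v -> g x = 0 -> exists l, l < 0 /\ is_derive g x l) ->
  forall y, u < y < v -> g y < 0.
Proof.
  intros Huv Hc Hu Hd y Hy.
  destruct (Rlt_or_le (g y) 0) as [|Hgy]; [auto | exfalso].
  destruct (negative_right_of g u v u ltac:(lra) Hc Hu (fun H0 => Hd u ltac:(lra) H0))
    as [eta [He Hstart]].
  destruct (first_zero g u v y eta Hy Hc He Hstart Hgy) as [t [Ht [Hzero Hbelow]]].
  destruct (Hd t ltac:(lra) Hzero) as [l [Hl Hdl]].
  destruct (sign_near_zero g t l Hdl Hzero Hl) as [eta' [He' [_ Hleft]]].
  set (r := Rmax u (t - eta') + (t - Rmax u (t - eta')) / 2).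
  assert (Hm1 := Rmax_l u (t - eta')). assert (Hm2 := Rmax_r u (t - eta')).
  assert (Hm3 : Rmax u (t - eta') < t) by (apply Rmax_lub_lt; lra).
  specialize (Hleft r ltac:(unfold r; lra)). specialize (Hbelow r ltac:(unfold r; lra)). lra.
Qed.

(* Second maximum principle: if g(u) < 0 and g' <= 0 wherever g < 0, then g <= g(u) on
   [u, v].  The perturbation g - g(u) - eps (1 + t - u) satisfies [stays_negative]. *)
Lemma stays_below_start (g : R -> R) (u v : R) : u < v -> cont_on g u v -> g u < 0 ->
  (forall x, u < x < v -> g x < 0 -> exists l, l <= 0 /\ is_derive g x l) ->
  forall x, u <= x <= v -> g x <= g u.
Proof.
  intros Huv Hc Hu Hd.
  assert (Hpert : forall eps, 0 < eps -> eps * (1 + v - u) < - g u ->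
            forall t, u < t < v -> g t - g u - eps * (1 + t - u) < 0).
  { intros eps He Hsmall.
    apply (stays_negative (fun t => g t - g u - eps * (1 + t - u)) u v Huv).
    - apply cont_on_minus; [apply cont_on_minus; auto; apply cont_on_const|].
      apply cont_on_mult; [apply cont_on_const|].
      apply cont_on_minus; [apply cont_on_plus|]; auto using cont_on_const, cont_on_id.
    - nra.
    - intros t Ht Hk0.
      assert (Htu : u < t) by (destruct (Rle_lt_or_eq_dec _ _ (proj1 Ht)) as [|<-]; nra).
      assert (Hgt : g t < 0) by nra.
      destruct (Hd t ltac:(lra) Hgt) as [l [Hl Hdl]].
      exists (l - 0 - eps * 1). split; [lra|].
      apply derive_minus; [apply derive_minus; [exact Hdl | apply derive_const]|].
      apply (is_derive_scal (fun t => 1 + t - u)). auto_derive; [auto | ring]. }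
  assert (Hint : forall t, u < t < v -> g t <= g u).
  { intros t Ht. apply le_epsilon. intros e He.
    set (eps := Rmin e (- g u) / (2 * (1 + v - u))).
    assert (Hm1 := Rmin_l e (- g u)). assert (Hm2 := Rmin_r e (- g u)).
    assert (Hm3 : 0 < Rmin e (- g u)) by (apply Rmin_pos; lra).
    assert (Heps : eps * (1 + v - u) = Rmin e (- g u) / 2) by (unfold eps; field; lra).
    assert (0 < eps) by (unfold eps; apply Rdiv_lt_0_compat; lra).
    specialize (Hpert eps ltac:(lra) ltac:(lra) t Ht).
    assert (eps * (1 + t - u) <= eps * (1 + v - u)) by (apply Rmult_le_compat_l; lra).
    lra. }
  intros x Hx. apply (cont_on_bound g u v (g u) x Huv Hc Hx Hint).
Qed.

Lemma nonincreasing (g : R -> R) (u v : R) : u < v -> cont_on g u v ->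
  (forall x, u < x < v -> exists l, l <= 0 /\ is_derive g x l) ->
  forall x, u <= x <= v -> g x <= g u.
Proof.
  intros Huv Hc Hd x Hx.
  assert (g x - g u - 1 <= g u - g u - 1); [|lra].
  apply (stays_below_start (fun t => g t - g u - 1) u v Huv); auto; [| lra |].
  - apply cont_on_minus; [apply cont_on_minus; auto|]; apply cont_on_const.
  - intros t Ht _. destruct (Hd t Ht) as [l [Hl Hdl]]. exists (l - 0 - 0). split; [lra|].
    apply derive_minus; [apply derive_minus|]; auto using derive_const.
Qed.

Definition neg_sol_on (h q : R -> R) (c u v : R) (z : R -> R) : Prop :=
  forall x, u < x < v -> z x < 0 /\ is_derive z x (h x - c - q x / z x).

Lemma ode_sol_neg_sol h q c z : ode_sol h q c z -> neg_sol_on h q c 0 1 z.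
Proof. intros [_ [Hn Hd]] x Hx. auto. Qed.

Lemma neg_sol_on_sub h q c u v u' v' z :
  neg_sol_on h q c u v z -> u <= u' -> v' <= v -> neg_sol_on h q c u' v' z.
Proof. intros H Hu Hv x Hx. apply H. lra. Qed.

Lemma neg_sol_cont h q c u v a b z : neg_sol_on h q c u v z -> u < a -> b < v -> cont_on z a b.
Proof.
  intros H Ha Hb. apply cont_on_of_derive. intros t Ht.
  eexists. apply (H t). lra.
Qed.

Lemma negative_max (z : R -> R) u v : u <= v -> (forall x, u <= x <= v -> continuity_pt z x) ->
  (forall x, u <= x <= v -> z x < 0) -> exists m, m < 0 /\ forall x, u <= x <= v -> z x <= m.
Proof.
  intros Huv Hc Hn. destruct (continuity_ab_maj z u v Huv Hc) as [M [HM1 HM2]].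
  exists (z M). auto.
Qed.

Lemma gap_derive (h q : R -> R) (c1 c2 : R) (z w : R -> R) t : z t < 0 -> w t < 0 ->
  is_derive z t (h t - c1 - q t / z t) -> is_derive w t (h t - c2 - q t / w t) ->
  is_derive (fun s => z s - w s) t (c2 - c1 + q t / (z t * w t) * (z t - w t)).
Proof.
  intros Hz Hw Hdz Hdw.
  apply derive_eq with ((h t - c1 - q t / z t) - (h t - c2 - q t / w t)).
  - field. split; lra.
  - apply derive_minus; auto.
Qed.

(* Gronwall-type uniqueness for d' = a d with 0 <= a <= K: if d vanishes at x0, then
   d^2 (nondecreasing) vanishes to the left and d^2 e^{-2Kt} (nonincreasing) to the right. *)
Lemma linear_ode_zero (d a : R -> R) (u v x0 K : R) : u <= x0 <= v -> cont_on d u v ->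
  (forall t, u < t < v -> is_derive d t (a t * d t)) ->
  (forall t, u < t < v -> 0 <= a t <= K) ->
  d x0 = 0 -> forall x, u <= x <= v -> d x = 0.
Proof.
  intros Hx0 Hc Hd Ha H0 x Hx.
  destruct (Rtotal_order x x0) as [Hlt | [-> | Hgt]]; [| exact H0 |].
  - assert (Hsq : - (d x0 * d x0) <= - (d x * d x)); [| rewrite H0 in Hsq; nra].
    apply (nonincreasing (fun t => - (d t * d t)) x x0 Hlt); [| | lra].
    + apply (cont_on_ext (fun t => -1 * (d t * d t))); [intros; ring|].
      apply cont_on_mult; [apply cont_on_const|]. apply cont_on_mult; apply (cont_on_sub d u v); auto; lra.
    + intros t Ht. specialize (Ha t ltac:(lra)).
      exists (- (a t * d t * d t + d t * (a t * d t))). split; [nra|].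
      apply (is_derive_opp (fun t => d t * d t)). apply derive_mult; apply Hd; lra.
  - set (e := fun t => exp (- (2 * K) * t)).
    assert (He : forall t, is_derive e t (- (2 * K) * e t)) by (intros t; unfold e; auto_derive; auto; ring).
    assert (Hsq : d x * d x * e x <= d x0 * d x0 * e x0).
    { apply (nonincreasing (fun t => d t * d t * e t) x0 x Hgt); [| | lra].
      + apply cont_on_mult; [apply cont_on_mult; apply (cont_on_sub d u v); auto; lra|].
        apply cont_on_of_derive. intros t _. eexists. apply He.
      + intros t Ht. specialize (Ha t ltac:(lra)). assert (Het : 0 < e t) by apply exp_pos.
        eexists; split; [| apply derive_mult; [apply derive_mult; apply Hd; lra | apply He]].
        replace ((a t * d t * d t + d t * (a t * d t)) * e t + d t * d t * (- (2 * K) * e t))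
          with (2 * (d t * d t) * e t * (a t - K)) by ring.
        assert (0 <= 2 * (d t * d t) * e t) by nra. nra. }
    rewrite H0 in Hsq. assert (0 < e x) by apply exp_pos.
    assert (d x * d x <= 0); [apply Rmult_le_reg_r with (e x); lra | nra].
Qed.

(* There q is bounded and the solutions stay away
   from 0, so the gap equation has a bounded nonnegative coefficient q/(z w). *)
Lemma agree_on_compact (h q : R -> R) (c : R) (z w : R -> R) (A B Q u v x0 : R) :
  A < u -> u <= x0 <= v -> v < B ->
  neg_sol_on h q c A B z -> neg_sol_on h q c A B w ->
  (forall x, A < x < B -> 0 <= q x <= Q) ->
  z x0 = w x0 -> forall x, u <= x <= v -> z x = w x.
Proof.
  intros Hu Hx0 Hv Hz Hw Hq Heq x Hx.
  assert (Hct : forall y, neg_sol_on h q c A B y -> forall t, u <= t <= v -> continuity_pt y t).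
  { intros y Hy t Ht. eapply derive_continuity_pt. apply (Hy t). lra. }
  destruct (negative_max z u v ltac:(lra) (Hct z Hz)) as [mz [Hmz Hmz2]].
  { intros t Ht. apply (Hz t). lra. }
  destruct (negative_max w u v ltac:(lra) (Hct w Hw)) as [mw [Hmw Hmw2]].
  { intros t Ht. apply (Hw t). lra. }
  assert (Hgap : z x - w x = 0); [|lra].
  apply (linear_ode_zero (fun t => z t - w t) (fun t => q t / (z t * w t)) u v x0 (Q / (mz * mw)));
    try lra.
  - apply cont_on_minus; apply (neg_sol_cont h q c A B); auto.
  - intros t Ht. destruct (Hz t ltac:(lra)) as [Hzt Hdz]. destruct (Hw t ltac:(lra)) as [Hwt Hdw].
    apply derive_eq with (c - c + q t / (z t * w t) * (z t - w t)); [ring|].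
    apply (gap_derive h q c c); auto.
  - intros t Ht. specialize (Hmz2 t ltac:(lra)). specialize (Hmw2 t ltac:(lra)).
    specialize (Hq t ltac:(lra)).
    assert (0 < mz * mw) by nra. assert (mz * mw <= z t * w t) by nra.
    split; [apply Rdiv_le_0_compat; nra|].
    unfold Rdiv. apply Rmult_le_compat; try lra.
    + left; apply Rinv_0_lt_compat; nra.
    + apply Rinv_le_contravar; lra.
Qed.

Lemma solutions_agree (h q : R -> R) (c : R) (z w : R -> R) (A B Q x0 : R) :
  A < x0 < B -> cont_on z A B -> cont_on w A B ->
  neg_sol_on h q c A B z -> neg_sol_on h q c A B w ->
  (forall x, A < x < B -> 0 <= q x <= Q) ->
  z x0 = w x0 -> forall x, A <= x <= B -> z x = w x.
Proof.
  intros Hx0 Hcz Hcw Hz Hw Hq Heq.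
  assert (Hint : forall x, A < x < B -> z x = w x).
  { intros x Hx.
    apply (agree_on_compact h q c z w A B Q (Rmin x x0) (Rmax x x0) x0); auto.
    - apply Rmin_glb_lt; lra.
    - split; [apply Rmin_r | apply Rmax_r].
    - apply Rmax_lub_lt; lra.
    - split; [apply Rmin_l | apply Rmax_l]. }
  intros x Hx.
  assert (Hd1 : z x - w x <= 0).
  { apply (cont_on_bound (fun t => z t - w t) A B 0 x ltac:(lra)); auto using cont_on_minus.
    intros y Hy. rewrite Hint; auto; lra. }
  assert (Hd2 : w x - z x <= 0).
  { apply (cont_on_bound (fun t => w t - z t) A B 0 x ltac:(lra)); auto using cont_on_minus.
    intros y Hy. rewrite Hint; auto; lra. }
  lra.
Qed.

(* At a touching point the gap has
   derivative cs - c < 0, and once negative the gap cannot increase. *)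
Lemma strictly_below_slower (h q : R -> R) (c cs : R) (z zs : R -> R) (u v x1 x2 : R) :
  cs < c -> u < x1 < x2 -> x2 <= v -> cont_on z x1 x2 -> cont_on zs x1 x2 ->
  (forall x, u < x < v -> 0 <= q x) ->
  neg_sol_on h q c u v z -> neg_sol_on h q cs u v zs ->
  z x1 <= zs x1 -> z x2 < zs x2.
Proof.
  intros Hc Hx Hv Hcz Hczs Hq Hz Hzs H1.
  set (d := fun t => z t - zs t).
  assert (Hdd : forall t, x1 <= t < x2 -> z t < 0 /\ zs t < 0 /\
            is_derive d t (cs - c + q t / (z t * zs t) * d t)).
  { intros t Ht. destruct (Hz t ltac:(lra)) as [Hzt Hdz]. destruct (Hzs t ltac:(lra)) as [Hzst Hdzs].
    split; [auto | split; [auto | apply (gap_derive h q c cs); auto]]. }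
  assert (Hneg : forall t, x1 < t < x2 -> d t < 0).
  { apply stays_negative; [lra | apply cont_on_minus; auto | unfold d; lra |].
    intros t Ht Ht0. destruct (Hdd t Ht) as [_ [_ Hdt]].
    exists (cs - c + q t / (z t * zs t) * d t). split; [rewrite Ht0; lra | auto]. }
  set (m := (x1 + x2) / 2).
  assert (Hm : d m < 0) by (apply Hneg; unfold m; lra).
  assert (d x2 <= d m); [|unfold d in *; lra].
  apply (stays_below_start d m x2); [unfold m; lra | | auto | | unfold m; lra].
  - apply (cont_on_sub d x1 x2); [apply cont_on_minus; auto | unfold m; lra | lra].
  - intros t Ht Hdt. destruct (Hdd t ltac:(unfold m in *; lra)) as [Hzt [Hzst Hdt']].
    exists (cs - c + q t / (z t * zs t) * d t). split; auto.
    assert (0 <= q t / (z t * zs t)) by (apply Rdiv_le_0_compat; [apply Hq; unfold m in *; lra | nra]).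
    nra.
Qed.

(* For a common speed, the gap z - w between two negative solutions with z below w can
   only widen: the gap equation d' = q/(z w) d has a nonnegative coefficient. *)
Lemma gap_widens (h q : R -> R) (c : R) (z w : R -> R) (x1 x2 : R) :
  x1 < x2 -> cont_on z x1 x2 -> cont_on w x1 x2 -> (forall x, x1 < x < x2 -> 0 <= q x) ->
  neg_sol_on h q c x1 x2 z -> neg_sol_on h q c x1 x2 w ->
  z x1 < w x1 -> z x2 - w x2 <= z x1 - w x1.
Proof.
  intros Hx Hcz Hcw Hq Hz Hw H1.
  apply (stays_below_start (fun t => z t - w t) x1 x2 Hx (cont_on_minus z w x1 x2 Hcz Hcw));
    [lra | | lra].
  intros t Ht Hdt. destruct (Hz t Ht) as [Hzt Hdz]. destruct (Hw t Ht) as [Hwt Hdw].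
  exists (c - c + q t / (z t * w t) * (z t - w t)). split.
  - assert (0 <= q t / (z t * w t)) by (apply Rdiv_le_0_compat; [apply Hq; lra | nra]). nra.
  - apply (gap_derive h q c c); auto.
Qed.

(* Functions continuous on [0, 1] are extended to R by clamping the argument. *)
Definition clamp (t : R) : R := Rmax 0 (Rmin 1 t).

Lemma clamp_range t : 0 <= clamp t <= 1.
Proof. unfold clamp, Rmax, Rmin. repeat destruct Rle_dec; lra. Qed.

Lemma clamp_id t : 0 <= t <= 1 -> clamp t = t.
Proof. intros. unfold clamp, Rmax, Rmin. repeat destruct Rle_dec; lra. Qed.

Lemma clamp_lipschitz x y : Rabs (clamp y - clamp x) <= Rabs (y - x).
Proof. unfold clamp, Rmax, Rmin, Rabs. repeat destruct Rle_dec; repeat destruct Rcase_abs; lra. Qed.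

Lemma continuity_pt_of_eps (f : R -> R) x : (forall eps, 0 < eps -> exists d, 0 < d /\
  forall y, Rabs (y - x) < d -> Rabs (f y - f x) < eps) -> continuity_pt f x.
Proof.
  intros H eps He. destruct (H eps He) as [d [Hd H2]]. exists d. split; [lra|].
  intros y [_ Hy]. apply H2. exact Hy.
Qed.

Lemma cont_clamp (g : R -> R) : cont01 g -> forall x, continuity_pt (fun t => g (clamp t)) x.
Proof.
  intros Hg x. apply continuity_pt_of_eps. intros eps He.
  destruct (cont_on_eps g 0 1 (clamp x) Hg (clamp_range x) eps He) as [d [Hd H2]].
  exists d. split; auto. intros y Hy. apply H2; [apply clamp_range|].
  eapply Rle_lt_trans; [apply clamp_lipschitz | auto].
Qed.

Lemma cont01_bounded (g : R -> R) : cont01 g -> exists M, forall t, Rabs (g (clamp t)) <= M.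
Proof.
  intros Hg.
  destruct (continuity_ab_maj (fun t => Rabs (g (clamp t))) 0 1 ltac:(lra)) as [Mx [HM _]].
  { intros t _. exact (continuity_pt_comp (fun t => g (clamp t)) Rabs t (cont_clamp g Hg t)
                        (Rcontinuity_abs _)). }
  exists (Rabs (g (clamp Mx))). intros t. specialize (HM (clamp t) (clamp_range t)).
  rewrite (clamp_id (clamp t)) in HM by apply clamp_range. exact HM.
Qed.

Lemma ode_sol_unique (h q : R -> R) (c : R) (z w : R -> R) (x0 : R) :
  cont01 q -> (forall x, 0 < x < 1 -> 0 <= q x) ->
  ode_sol h q c z -> ode_sol h q c w -> 0 < x0 < 1 -> z x0 = w x0 ->
  forall x, 0 <= x <= 1 -> z x = w x.
Proof.
  intros Hq Hq0 Hz Hw Hx0 Heq.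
  destruct (cont01_bounded q Hq) as [Q HQ].
  apply (solutions_agree h q c z w 0 1 Q x0); auto using ode_sol_neg_sol;
    [apply Hz | apply Hw |].
  intros x Hx. split; [auto|]. specialize (HQ x). rewrite clamp_id in HQ by lra.
  eapply Rle_trans; [apply Rle_abs | exact HQ].
Qed.

Section Comparison_with_zstar.

Variables (h q : R -> R) (c cs : R) (zs : R -> R).
Hypothesis Hc : cs < c.
Hypothesis Hq0 : forall x, 0 < x < 1 -> 0 <= q x.
Hypothesis Hzs : ode_sol h q cs zs.

Lemma above_zstar_left (z : R -> R) (phi0 : R) : 0 < phi0 < 1 -> neg_sol_on h q c 0 1 z ->
  z phi0 = zs phi0 -> forall x, 0 < x < phi0 -> zs x < z x.
Proof.
  intros Hp Hz Heq x Hx. apply Rnot_le_lt. intros Hle.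
  assert (z phi0 < zs phi0); [|lra].
  apply (strictly_below_slower h q c cs z zs 0 1 x phi0); auto using ode_sol_neg_sol; try lra.
  - apply (neg_sol_cont h q c 0 1); auto; lra.
  - apply (cont_on_sub zs 0 1); [apply Hzs | lra | lra].
Qed.

Lemma below_zstar_right (z : R -> R) (phi0 : R) : 0 < phi0 < 1 -> ode_sol h q c z ->
  z phi0 = zs phi0 -> forall x, phi0 < x <= 1 -> z x < zs x.
Proof.
  intros Hp Hz Heq x Hx.
  apply (strictly_below_slower h q c cs z zs 0 1 phi0 x); auto using ode_sol_neg_sol; try lra.
  - apply (cont_on_sub z 0 1); [apply Hz | lra | lra].
  - apply (cont_on_sub zs 0 1); [apply Hzs | lra | lra].
Qed.

(* Squeezed between z* and 0 on (0, phi0), such a solution vanishes at 0 when z* does. *)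
Lemma vanishes_at_0 (z : R -> R) (phi0 : R) : zs 0 = 0 -> 0 < phi0 < 1 -> ode_sol h q c z ->
  z phi0 = zs phi0 -> z 0 = 0.
Proof.
  intros Hzs0 Hp Hz Heq.
  assert (Habove := above_zstar_left z phi0 Hp (ode_sol_neg_sol _ _ _ _ Hz) Heq).
  destruct Hz as [Hcz [Hn _]].
  assert (H1 : zs 0 - z 0 <= 0).
  { apply (cont_on_bound (fun t => zs t - z t) 0 phi0 0 0); [lra | | lra |].
    - apply cont_on_minus; apply (cont_on_sub _ 0 1); auto; try lra. apply Hzs.
    - intros y Hy. specialize (Habove y Hy). lra. }
  assert (H2 : z 0 <= 0).
  { apply (cont_on_bound z 0 phi0 0 0); [lra | apply (cont_on_sub _ 0 1); auto; lra | lra |].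
    intros y Hy. left; apply Hn; lra. }
  lra.
Qed.

End Comparison_with_zstar.

Lemma dominated_growth_right (f b df db : R -> R) (x0 x : R) : x0 < x ->
  (forall t, is_derive f t (df t)) -> (forall t, is_derive b t (db t)) ->
  (forall t, x0 < t < x -> Rabs (df t) <= db t) ->
  Rabs (f x - f x0) <= b x - b x0.
Proof.
  intros Hx Hf Hb Hdom.
  assert (Hmono : forall g dg, (forall t, is_derive g t (dg t)) ->
            (forall t, x0 < t < x -> dg t <= 0) -> g x <= g x0).
  { intros g dg Hg Hneg. apply (nonincreasing g x0 x Hx); [| | lra].
    - apply cont_on_of_derive. intros t _. eauto.
    - intros t Ht. exists (dg t). auto. }
  assert (Hup : f x - b x <= f x0 - b x0).
  { apply (Hmono (fun t => f t - b t) (fun t => df t - db t)).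
    - intros t. apply derive_minus; auto.
    - intros t Ht. specialize (Hdom t Ht). apply Rabs_le_between in Hdom. lra. }
  assert (Hdown : - f x - b x <= - f x0 - b x0).
  { apply (Hmono (fun t => - f t - b t) (fun t => - df t - db t)).
    - intros t. apply derive_minus; auto. apply (is_derive_opp f). auto.
    - intros t Ht. specialize (Hdom t Ht). apply Rabs_le_between in Hdom. lra. }
  apply Rabs_le. lra.
Qed.

Lemma exp_growth (f df : R -> R) (x0 L N : R) : f x0 = 0 ->
  (forall t, is_derive f t (df t)) ->
  (forall t, Rabs (df t) <= N * (2 * L) * exp (2 * L * Rabs (t - x0))) ->
  forall x, Rabs (f x) <= N * (exp (2 * L * Rabs (x - x0)) - 1).
Proof.
  intros Hf0 Hf Hdom x.
  destruct (Rtotal_order x x0) as [Hlt | [-> | Hgt]].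
  - (* reflect: s |-> f (- s) to the right of - x0 *)
    assert (H := dominated_growth_right (fun s => f (- s)) (fun s => N * (exp (2 * L * (s + x0)) - 1))
                   (fun s => - df (- s)) (fun s => N * (2 * L) * exp (2 * L * (s + x0)))
                   (- x0) (- x) ltac:(lra)).
    cbv beta in H. rewrite !Ropp_involutive, Hf0, Rminus_0_r in H.
    replace (- x0 + x0) with 0 in H by ring. rewrite Rmult_0_r, exp_0 in H.
    replace (N * (1 - 1)) with 0 in H by ring. rewrite Rminus_0_r in H.
    rewrite (Rabs_left (x - x0)) by lra. replace (- (x - x0)) with (- x + x0) by ring.
    apply H.
    + intros s. apply derive_reflect. auto.
    + intros s. auto_derive; [auto | ring].
    + intros s Hs. rewrite Rabs_Ropp. eapply Rle_trans; [apply Hdom|].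
      rewrite Rabs_left by lra. replace (- (- s - x0)) with (s + x0) by ring. lra.
  - replace (x0 - x0) with 0 by ring. rewrite Hf0, Rabs_R0, Rmult_0_r, exp_0. lra.
  - assert (H := dominated_growth_right f (fun t => N * (exp (2 * L * (t - x0)) - 1))
                   df (fun t => N * (2 * L) * exp (2 * L * (t - x0))) x0 x Hgt).
    cbv beta in H. replace (x0 - x0) with 0 in H by ring.
    rewrite Hf0, Rminus_0_r, Rmult_0_r, exp_0 in H.
    rewrite (Rabs_pos_eq (x - x0)) by lra. replace (N * (1 - 1)) with 0 in H by ring. rewrite Rminus_0_r in H.
    apply H; auto.
    + intros t. auto_derive; [auto | unfold Rminus; ring].
    + intros t Ht. eapply Rle_trans; [apply Hdom|]. rewrite Rabs_pos_eq by lra. lra.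
Qed.

Lemma ex_RInt_of_continuity (f : R -> R) a b : (forall t, continuity_pt f t) -> ex_RInt f a b.
Proof.
  intros H. apply (@ex_RInt_continuous R_CompleteNormedModule f a b).
  intros. apply continuity_pt_filterlim; auto.
Qed.

Lemma derive_integral (f : R -> R) x0 v t : (forall t, continuity_pt f t) ->
  is_derive (fun x => v + RInt f x0 x) t (f t).
Proof.
  intros H. apply derive_eq with (0 + f t); [ring|]. apply derive_plus; [apply derive_const|].
  apply (is_derive_RInt f (RInt f x0) x0 t).
  - apply filter_forall. intros b. apply (@RInt_correct R_CompleteNormedModule f x0 b).
    apply ex_RInt_of_continuity; auto.
  - apply continuity_pt_filterlim; auto.
Qed.

Lemma RInt_abs_bound (f : R -> R) a b M : (forall t, continuity_pt f t) ->
  (forall t, Rmin a b <= t <= Rmax a b -> Rabs (f t) <= M) ->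
  Rabs (RInt f a b) <= Rabs (b - a) * M.
Proof.
  intros Hc Hb. destruct (Rle_or_lt a b) as [Hab | Hab].
  - rewrite (Rabs_pos_eq (b - a)) by lra.
    apply abs_RInt_le_const; auto using ex_RInt_of_continuity.
    intros t Ht. apply Hb. rewrite Rmin_left, Rmax_right; lra.
  - rewrite <- (@opp_RInt_swap R_CompleteNormedModule f b a) by (apply ex_RInt_of_continuity; auto).
    rewrite (Rabs_left (b - a)) by lra.
    change (Rabs (- RInt f b a) <= - (b - a) * M). rewrite Rabs_Ropp.
    replace (- (b - a)) with (a - b) by ring.
    apply abs_RInt_le_const; auto using ex_RInt_of_continuity; [lra|].
    intros t Ht. apply Hb. rewrite Rmin_right, Rmax_left; lra.
Qed.

Lemma continuity_pt_eps (f : R -> R) x : continuity_pt f x -> forall eps, 0 < eps ->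
  exists d, 0 < d /\ forall y, Rabs (y - x) < d -> Rabs (f y - f x) < eps.
Proof.
  intros H eps He. destruct (H eps He) as [d [Hd H2]]. exists d. split; [lra|].
  intros y Hy. destruct (Req_dec y x) as [-> | Hne].
  - rewrite Rminus_diag_eq, Rabs_R0; auto.
  - apply (H2 y). split; [split; [exact I | auto] | exact Hy].
Qed.

Lemma geometric_small (K eps : R) : 0 <= K -> 0 < eps ->
  exists N, forall n, (n >= N)%nat -> K * (/ 2) ^ n < eps.
Proof.
  intros HK He. assert (HC : 0 < eps / (K + 1)) by (apply Rdiv_lt_0_compat; lra).
  destruct (pow_lt_1_zero (/ 2) ltac:(rewrite Rabs_pos_eq; lra) _ HC) as [N HN].
  exists N. intros n Hn. specialize (HN n Hn). rewrite Rabs_pos_eq in HN by (apply pow_le; lra).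
  assert (0 <= (/ 2) ^ n) by (apply pow_le; lra).
  apply Rle_lt_trans with ((K + 1) * (/ 2) ^ n); [nra|].
  apply Rlt_le_trans with ((K + 1) * (eps / (K + 1))); [apply Rmult_lt_compat_l; lra | right; field; lra].
Qed.

Lemma exp_monotone a b : a <= b -> exp a <= exp b.
Proof.
  intros H. destruct (Rle_lt_or_eq_dec _ _ H) as [Hlt | ->]; [left; apply exp_increasing; auto | lra].
Qed.

Fixpoint picard_iter (G : R -> R -> R) (x0 v : R) (n : nat) : R -> R :=
  match n with
  | O => fun _ => v
  | S n => fun x => v + RInt (fun s => G s (picard_iter G x0 v n s)) x0 x
  end.

(* The iterates converge locally uniformly, with the error
   controlled in the weighted norm e^{-2L|x - x0|}|.|, in which the Picard map is a
   1/2-contraction. *)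
Section Picard.

Variables (G : R -> R -> R) (x0 v B L : R).
Hypothesis HL : 0 < L.
Hypothesis HB : 0 <= B.
Hypothesis HGc : forall u, (forall t, continuity_pt u t) -> forall t, continuity_pt (fun s => G s (u s)) t.
Hypothesis HGb : forall t y, Rabs (G t y) <= B.
Hypothesis HGl : forall t y1 y2, Rabs (G t y1 - G t y2) <= L * Rabs (y1 - y2).

Let P := picard_iter G x0 v.
Let M := B / (2 * L).
Let weight (x : R) := exp (2 * L * Rabs (x - x0)).

Lemma picard_cont n t : continuity_pt (P n) t.
Proof.
  revert t. induction n as [|n IH]; intros t.
  - apply continuity_pt_const. intros a b; auto.
  - eapply derive_continuity_pt. apply (derive_integral (fun s => G s (P n s))). apply HGc; auto.
Qed.

Lemma picard_derive n t : is_derive (P (S n)) t (G t (P n t)).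
Proof. apply (derive_integral (fun s => G s (P n s))). apply HGc, picard_cont. Qed.

Lemma picard_start n : P n x0 = v.
Proof. destruct n; [reflexivity|]. unfold P; simpl. rewrite RInt_point. unfold zero; simpl. ring. Qed.

Lemma weight_ge_1 x : 1 <= weight x.
Proof.
  unfold weight. rewrite <- exp_0. apply exp_monotone.
  assert (0 <= Rabs (x - x0)) by apply Rabs_pos. nra.
Qed.

Lemma M_nonneg : 0 <= M.
Proof. unfold M. apply Rdiv_le_0_compat; lra. Qed.

Lemma picard_step n x : Rabs (P (S n) x - P n x) <= M * (/ 2) ^ n * (weight x - 1).
Proof.
  revert x. induction n as [|n IH]; intros x.
  - apply (exp_growth (fun x => P 1%nat x - P 0%nat x) (fun t => G t v - 0) x0 L (M * (/ 2) ^ 0)).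
    + rewrite !picard_start. ring.
    + intros t. apply derive_minus; [apply picard_derive | apply derive_const].
    + intros t. rewrite Rminus_0_r. eapply Rle_trans; [apply HGb|].
      assert (H1 := weight_ge_1 t). unfold weight in H1. simpl. unfold M.
      replace (B / (2 * L) * 1 * (2 * L)) with B by (field; lra). nra.
  - apply (exp_growth (fun x => P (S (S n)) x - P (S n) x)
             (fun t => G t (P (S n) t) - G t (P n t)) x0 L (M * (/ 2) ^ S n)).
    + rewrite !picard_start. ring.
    + intros t. apply derive_minus; apply picard_derive.
    + intros t. eapply Rle_trans; [apply HGl|].
      assert (0 <= M * (/ 2) ^ n) by (apply Rmult_le_pos; [apply M_nonneg | apply pow_le; lra]).
      specialize (IH t). unfold weight in IH |- *.
      assert (Hx := exp_pos (2 * L * Rabs (t - x0))). simpl. nra.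
Qed.

Lemma picard_cauchy n m x : (n <= m)%nat -> Rabs (P m x - P n x) <= 2 * M * weight x * (/ 2) ^ n.
Proof.
  intros Hnm. replace m with (n + (m - n))%nat by lia.
  assert (Htel : forall j, Rabs (P (n + j)%nat x - P n x) <= 2 * M * weight x * ((/ 2) ^ n - (/ 2) ^ (n + j))).
  { induction j as [|j IH].
    - rewrite Nat.add_0_r, Rminus_diag_eq, Rabs_R0 by auto. right; ring.
    - replace (P (n + S j)%nat x - P n x) with
        ((P (S (n + j)) x - P (n + j)%nat x) + (P (n + j)%nat x - P n x)) by (rewrite Nat.add_succ_r; ring).
      eapply Rle_trans; [apply Rabs_triang|]. rewrite Nat.add_succ_r. simpl pow.
      assert (Hs := picard_step (n + j) x). assert (Hw := weight_ge_1 x).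
      assert (0 <= M * (/ 2) ^ (n + j)) by (apply Rmult_le_pos; [apply M_nonneg | apply pow_le; lra]).
      nra. }
  eapply Rle_trans; [apply Htel|].
  assert (0 <= (/ 2) ^ (n + (m - n))) by (apply pow_le; lra).
  assert (0 <= 2 * M * weight x) by (assert (Hw := weight_ge_1 x); assert (Hm := M_nonneg); nra). nra.
Qed.

Lemma picard_converges x : ex_finite_lim_seq (fun n => P n x).
Proof.
  apply ex_lim_seq_cauchy_corr. intros eps.
  set (K := 2 * M * weight x).
  assert (HK : 0 <= K) by (unfold K; assert (Hw := weight_ge_1 x); assert (Hm := M_nonneg); nra).
  destruct (geometric_small K (eps / 2) HK ltac:(assert (H := cond_pos eps); lra)) as [N HN].
  exists N. intros n m Hn Hm. specialize (HN N (le_n N)).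
  replace (P n x - P m x) with ((P n x - P N x) - (P m x - P N x)) by ring.
  eapply Rle_lt_trans; [apply Rabs_triang|]. rewrite Rabs_Ropp.
  assert (Hn' := picard_cauchy N n x Hn). assert (Hm' := picard_cauchy N m x Hm).
  fold K in Hn', Hm'. lra.
Qed.

Let W (x : R) := real (Lim_seq (fun n => P n x)).

Lemma picard_limit x : is_lim_seq (fun n => P n x) (W x).
Proof.
  destruct (picard_converges x) as [l Hl]. unfold W. rewrite (is_lim_seq_unique _ _ Hl). exact Hl.
Qed.

Lemma picard_error n x : Rabs (W x - P n x) <= 2 * M * weight x * (/ 2) ^ n.
Proof.
  assert (Hlim : is_lim_seq (fun m => Rabs (P m x - P n x)) (Rabs (W x - P n x))).
  { apply (is_lim_seq_abs _ (W x - P n x)).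
    apply is_lim_seq_minus'; [apply picard_limit | apply is_lim_seq_const]. }
  assert (H := is_lim_seq_le_loc _ _ _ _ ltac:(exists n; intros m Hm; apply (picard_cauchy n m x Hm))
                 Hlim (is_lim_seq_const (2 * M * weight x * (/ 2) ^ n))).
  exact H.
Qed.

(* The limit is continuous: near x the error bound is uniform. *)
Lemma picard_limit_cont x : continuity_pt W x.
Proof.
  apply continuity_pt_of_eps. intros eps He.
  set (K := 2 * M * exp (2 * L * (Rabs (x - x0) + 1))).
  assert (HK : 0 <= K).
  { unfold K. assert (Hx := exp_pos (2 * L * (Rabs (x - x0) + 1))). assert (Hm := M_nonneg). nra. }
  assert (Hunif : forall n t, Rabs (t - x) < 1 -> Rabs (W t - P n t) <= K * (/ 2) ^ n).
  { intros n t Ht. eapply Rle_trans; [apply picard_error|].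
    assert (0 <= (/ 2) ^ n) by (apply pow_le; lra). assert (Hm := M_nonneg).
    assert (weight t <= exp (2 * L * (Rabs (x - x0) + 1))).
    { unfold weight. apply exp_monotone. apply Rmult_le_compat_l; [lra|].
      replace (t - x0) with ((t - x) + (x - x0)) by ring.
      eapply Rle_trans; [apply Rabs_triang | lra]. }
    unfold K. apply Rmult_le_compat_r; auto. nra. }
  destruct (geometric_small K (eps / 3) HK ltac:(lra)) as [N HN]. specialize (HN N (le_n N)).
  destruct (continuity_pt_eps (P N) x (picard_cont N x) (eps / 3) ltac:(lra)) as [d [Hd Hd2]].
  exists (Rmin d 1). split; [apply Rmin_pos; lra|]. intros t Ht.
  assert (Ht1 := Rmin_l d 1). assert (Ht2 := Rmin_r d 1).
  assert (Hbt := Hunif N t ltac:(lra)).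
  assert (Hbx := Hunif N x ltac:(rewrite Rminus_diag_eq, Rabs_R0 by auto; lra)).
  specialize (Hd2 t ltac:(lra)).
  replace (W t - W x) with ((W t - P N t) + (P N t - P N x) - (W x - P N x)) by ring.
  eapply Rle_lt_trans; [apply Rabs_triang|].
  eapply Rle_lt_trans; [apply Rplus_le_compat_r, Rabs_triang|]. rewrite Rabs_Ropp. lra.
Qed.

Lemma picard_fixed_point x : W x = v + RInt (fun s => G s (W s)) x0 x.
Proof.
  assert (HGW : forall t, continuity_pt (fun s => G s (W s)) t) by (apply HGc, picard_limit_cont).
  set (Kx := 2 * M * weight x).
  assert (HKx : 0 <= Kx) by (unfold Kx; assert (Hw := weight_ge_1 x); assert (Hm := M_nonneg); nra).
  assert (Hsmall : forall eps, 0 < eps -> Rabs (W x - (v + RInt (fun s => G s (W s)) x0 x)) <= eps).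
  { intros eps He.
    assert (Hc : 0 <= (1 + Rabs (x - x0) * L) * Kx).
    { assert (0 <= Rabs (x - x0) * L) by (apply Rmult_le_pos; [apply Rabs_pos | lra]).
      apply Rmult_le_pos; lra. }
    destruct (geometric_small _ eps Hc He) as [N HN]. specialize (HN N (le_n N)).
    assert (H1 : Rabs (W x - P (S N) x) <= Kx * (/ 2) ^ N).
    { eapply Rle_trans; [apply picard_error|]. fold Kx. simpl pow.
      assert (0 <= (/ 2) ^ N) by (apply pow_le; lra). nra. }
    assert (H2 : P (S N) x - (v + RInt (fun s => G s (W s)) x0 x) =
                 RInt (fun s => G s (P N s) - G s (W s)) x0 x).
    { rewrite (@RInt_minus R_CompleteNormedModule); auto using ex_RInt_of_continuity, picard_cont.
      unfold P at 1; simpl. fold P. unfold minus, plus, opp; simpl. ring. }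
    assert (H3 : Rabs (RInt (fun s => G s (P N s) - G s (W s)) x0 x) <=
                 Rabs (x - x0) * (L * (Kx * (/ 2) ^ N))).
    { apply RInt_abs_bound.
      - intros t. apply continuity_pt_minus; [apply HGc, picard_cont | apply HGW].
      - intros t Ht. eapply Rle_trans; [apply HGl|]. apply Rmult_le_compat_l; [lra|].
        rewrite <- Rabs_Ropp. replace (- (P N t - W t)) with (W t - P N t) by ring.
        eapply Rle_trans; [apply picard_error|]. unfold Kx.
        assert (0 <= (/ 2) ^ N) by (apply pow_le; lra). assert (Hm := M_nonneg).
        apply Rmult_le_compat_r; auto. apply Rmult_le_compat_l; [lra|].
        unfold weight. apply exp_monotone. apply Rmult_le_compat_l; [lra|].
        destruct (Rle_or_lt x0 x).
        + rewrite Rmin_left, Rmax_right in Ht by lra. rewrite !Rabs_pos_eq; lra.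
        + rewrite Rmin_right, Rmax_left in Ht by lra. rewrite !Rabs_left1; lra. }
    replace (W x - (v + RInt (fun s => G s (W s)) x0 x)) with
      ((W x - P (S N) x) + (P (S N) x - (v + RInt (fun s => G s (W s)) x0 x))) by ring.
    rewrite H2. eapply Rle_trans; [apply Rabs_triang|].
    assert (0 <= (/ 2) ^ N) by (apply pow_le; lra).
    assert (0 <= Rabs (x - x0)) by apply Rabs_pos. nra. }
  apply Rminus_diag_uniq. apply Rabs_eq_0. apply Rle_antisym; [|apply Rabs_pos].
  apply le_epsilon. intros eps He. rewrite Rplus_0_l. auto.
Qed.

Lemma picard_exists :
  exists w, (forall t, continuity_pt w t) /\ w x0 = v /\ forall t, is_derive w t (G t (w t)).
Proof.
  exists W. split; [apply picard_limit_cont | split].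
  - rewrite picard_fixed_point, RInt_point. unfold zero; simpl. ring.
  - intros t. apply (is_derive_ext (fun x => v + RInt (fun s => G s (W s)) x0 x) W).
    + intros; symmetry; apply picard_fixed_point.
    + apply (derive_integral (fun s => G s (W s))). apply HGc, picard_limit_cont.
Qed.

End Picard.

(* The vector field H(t) - Qf(t)/y with the singularity at y = 0 cut off at level -del. *)
Definition truncated_field (H Qf : R -> R) (del t y : R) : R := H t - Qf t / Rmin y (- del).

Lemma truncated_field_agrees H Qf del t y : y <= - del ->
  truncated_field H Qf del t y = H t - Qf t / y.
Proof. intros Hy. unfold truncated_field. rewrite Rmin_left; auto. Qed.

Lemma truncated_field_cont (H Qf : R -> R) del : 0 < del ->
  (forall t, continuity_pt H t) -> (forall t, continuity_pt Qf t) ->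
  forall u, (forall t, continuity_pt u t) ->
  forall t, continuity_pt (fun s => truncated_field H Qf del s (u s)) t.
Proof.
  intros Hdel HH HQ u Hu t. unfold truncated_field.
  apply continuity_pt_minus; auto. apply continuity_pt_div; auto.
  - apply continuity_pt_of_eps. intros eps He.
    destruct (continuity_pt_eps u t (Hu t) eps He) as [d [Hd H2]].
    exists d. split; auto. intros y Hy. eapply Rle_lt_trans; [|apply (H2 y Hy)].
    unfold Rmin, Rabs. repeat destruct Rle_dec; repeat destruct Rcase_abs; lra.
  - assert (Hm := Rmin_r (u t) (- del)). lra.
Qed.

Lemma truncated_field_bounded (H Qf : R -> R) del Hb Q : 0 < del ->
  (forall t, Rabs (H t) <= Hb) -> (forall t, 0 <= Qf t <= Q) ->
  forall t y, Rabs (truncated_field H Qf del t y) <= Hb + Q / del.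
Proof.
  intros Hdel HH HQ t y. unfold truncated_field.
  assert (Hm := Rmin_r y (- del)). specialize (HQ t).
  unfold Rminus. eapply Rle_trans; [apply Rabs_triang|]. rewrite Rabs_Ropp.
  apply Rplus_le_compat; auto.
  rewrite Rabs_div by lra. rewrite (Rabs_pos_eq (Qf t)), (Rabs_left (Rmin y (- del))) by lra.
  unfold Rdiv. apply Rmult_le_compat; try lra.
  - left; apply Rinv_0_lt_compat; lra.
  - apply Rinv_le_contravar; lra.
Qed.

Lemma truncated_field_lipschitz (H Qf : R -> R) del Q : 0 < del -> (forall t, 0 <= Qf t <= Q) ->
  forall t y1 y2, Rabs (truncated_field H Qf del t y1 - truncated_field H Qf del t y2) <=
                  (Q / (del * del) + 1) * Rabs (y1 - y2).
Proof.
  intros Hdel HQ t y1 y2. unfold truncated_field. specialize (HQ t).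
  assert (H1 := Rmin_r y1 (- del)). assert (H2 := Rmin_r y2 (- del)).
  assert (Hlip : Rabs (Rmin y1 (- del) - Rmin y2 (- del)) <= Rabs (y1 - y2)).
  { unfold Rmin, Rabs. repeat destruct Rle_dec; repeat destruct Rcase_abs; lra. }
  set (m1 := Rmin y1 (- del)) in *. set (m2 := Rmin y2 (- del)) in *.
  replace (H t - Qf t / m1 - (H t - Qf t / m2)) with (Qf t * (m1 - m2) / (m1 * m2)) by (field; lra).
  rewrite Rabs_div, Rabs_mult, (Rabs_pos_eq (Qf t)), (Rabs_pos_eq (m1 * m2)) by nra.
  assert (del * del <= m1 * m2) by nra.
  assert (0 <= Rabs (m1 - m2)) by apply Rabs_pos. assert (0 <= Rabs (y1 - y2)) by apply Rabs_pos.
  apply Rle_trans with (Q * Rabs (y1 - y2) / (del * del)).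
  - unfold Rdiv. apply Rmult_le_compat; try nra.
    + left; apply Rinv_0_lt_compat; nra.
    + apply Rinv_le_contravar; nra.
  - replace (Q * Rabs (y1 - y2) / (del * del)) with (Q / (del * del) * Rabs (y1 - y2)) by (field; lra).
    nra.
Qed.

(* A solution of the truncated problem through (phi0, z*(phi0)) never reaches the cut-off
   level -del on (a, 1], provided del is small: on the right it stays below
   z* - (c - cs)/2 (t - phi0), and on the left the field pushes it down at level -del. *)
Section Trapping.

Variables (h q : R -> R) (c cs : R) (zs w : R -> R) (phi0 a del : R).
Hypothesis Hc : cs < c.
Hypothesis Hq0 : forall x, 0 < x < 1 -> 0 <= q x.
Hypothesis Hzs : ode_sol h q cs zs.
Hypothesis Hphi0 : a < phi0 < 1.
Hypothesis Ha : 0 <= a.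
Hypothesis Hdel : 0 < del.
Hypothesis Hright : forall t, phi0 <= t <= 1 -> zs t - (c - cs) / 2 * (t - phi0) < - del.
Hypothesis Hleft : forall t, a < t <= phi0 -> del * Rabs (h t - c) < q t.
Hypothesis Hw0 : w phi0 = zs phi0.
Hypothesis Hw : forall t,
  is_derive w t (truncated_field (fun s => h (clamp s) - c) (fun s => q (clamp s)) del t (w t)).

Lemma trapped_right t : phi0 <= t <= 1 -> w t < - del.
Proof.
  intros Ht. set (kap := (c - cs) / 2).
  set (g := fun t => w t - zs t + kap * (t - phi0)).
  assert (Hgc : cont_on g phi0 1).
  { apply cont_on_plus; [apply cont_on_minus|].
    - apply cont_on_of_derive. intros s _. eexists; apply Hw.
    - apply (cont_on_sub zs 0 1); [apply Hzs | lra | lra].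
    - apply cont_on_mult; [apply cont_on_const | apply cont_on_minus; auto using cont_on_id, cont_on_const]. }
  assert (Hneg : forall t, phi0 < t < 1 -> g t < 0).
  { apply stays_negative; [lra | auto | unfold g; rewrite Hw0; lra |].
    intros s Hs Hg0. unfold g in Hg0.
    destruct Hzs as [_ [Hzn Hzd]]. assert (Hzs_s := Hzn s ltac:(lra)).
    assert (Hws : w s <= zs s) by (assert (0 <= kap * (s - phi0)) by (unfold kap; apply Rmult_le_pos; lra); lra).
    set (ms := Rmin (w s) (- del)).
    assert (Hms : ms <= zs s) by (unfold ms; eapply Rle_trans; [apply Rmin_l | auto]).
    assert (Hq : q s / zs s <= q s / ms).
    { unfold Rdiv. apply Rmult_le_compat_l; [apply Hq0; lra|].
      destruct (Rle_lt_or_eq_dec _ _ Hms) as [Hlt | ->]; [|lra].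
      left. apply Rinv_lt_0_contravar; lra. }
    exists (h s - c - q s / ms - (h s - cs - q s / zs s) + kap * 1). split.
    - unfold kap in *. lra.
    - unfold g. apply derive_plus; [apply derive_minus|].
      + specialize (Hw s). unfold truncated_field in Hw. rewrite clamp_id in Hw by lra. exact Hw.
      + apply Hzd. lra.
      + apply (is_derive_scal (fun t => t - phi0)). apply derive_eq with (1 - 0); [ring|].
        apply derive_minus; [apply derive_id | apply derive_const]. }
  assert (Hg : g t <= 0).
  { destruct (Req_dec t phi0) as [-> | Hne]; [unfold g; rewrite Hw0; lra|].
    apply (cont_on_bound g phi0 1 0 t); auto; [lra|]. intros y Hy. left; auto. }
  specialize (Hright t Ht). unfold g, kap in *. lra.
Qed.

(* To the left of phi0, at level -del the field h - c + q/del is positive, so going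
   backwards the solution cannot rise to -del. *)
Lemma trapped_left t : a < t < phi0 -> w t < - del.
Proof.
  intros Ht. set (g := fun s => w (- s) + del).
  assert (Hgd : forall s, is_derive g s
      (- truncated_field (fun s => h (clamp s) - c) (fun s => q (clamp s)) del (- s) (w (- s)))).
  { intros s. unfold g. apply derive_eq with (- truncated_field (fun s => h (clamp s) - c)
      (fun s => q (clamp s)) del (- s) (w (- s)) + 0); [ring|].
    apply derive_plus; [apply (derive_reflect w s), Hw | apply derive_const]. }
  assert (g (- t) < 0); [|unfold g in *; rewrite Ropp_involutive in *; lra].
  apply (stays_negative g (- phi0) (- a)); [lra | | | | lra].
  - apply cont_on_of_derive. intros s _. eexists; apply Hgd.
  - unfold g. rewrite Ropp_involutive, Hw0. specialize (Hright phi0 ltac:(lra)). lra.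
  - intros s Hs Hg0. eexists; split; [|apply Hgd].
    unfold g in Hg0. assert (Hws : w (- s) = - del) by lra.
    rewrite Hws, truncated_field_agrees by lra. rewrite clamp_id by lra.
    specialize (Hleft (- s) ltac:(lra)).
    assert (Hpush : Rabs (h (- s) - c) < q (- s) / del).
    { apply Rmult_lt_reg_r with del; [lra|]. unfold Rdiv. rewrite Rmult_assoc, Rinv_l by lra. lra. }
    assert (Habs := Rle_abs (- (h (- s) - c))). rewrite Rabs_Ropp in Habs.
    replace (q (- s) / - del) with (- (q (- s) / del)) by (field; lra). lra.
Qed.

End Trapping.

(* On [phi0, 1], z* - (c - cs)/2 (t - phi0) stays below a negative level: near phi0
   because z* < 0, near 1 because of the linear term. *)
Lemma right_margin (h q : R -> R) (c cs : R) (zs : R -> R) (phi0 : R) :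
  ode_sol h q cs zs -> zs 1 = 0 -> cs < c -> 0 < phi0 < 1 ->
  exists d, 0 < d /\ forall t, phi0 <= t <= 1 -> zs t - (c - cs) / 2 * (t - phi0) < - d.
Proof.
  intros [_ [Hzn Hzd]] Hzs1 Hc Hp.
  set (m := (phi0 + 1) / 2). set (kap := (c - cs) / 2).
  destruct (negative_max zs phi0 m ltac:(unfold m; lra)) as [zsM [HzsM HzsM2]].
  { intros t Ht. eapply derive_continuity_pt. apply Hzd. unfold m in *; lra. }
  { intros t Ht. apply Hzn. unfold m in *; lra. }
  assert (Hkm : 0 < kap * (m - phi0)) by (unfold kap, m; apply Rmult_lt_0_compat; lra).
  exists (Rmin (- zsM) (kap * (m - phi0)) / 2).
  assert (Hr1 := Rmin_l (- zsM) (kap * (m - phi0))). assert (Hr2 := Rmin_r (- zsM) (kap * (m - phi0))).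
  assert (0 < Rmin (- zsM) (kap * (m - phi0))) by (apply Rmin_pos; lra).
  split; [lra|]. intros t Ht. fold kap. destruct (Rle_or_lt t m).
  - assert (zs t <= zsM) by (apply HzsM2; lra).
    assert (0 <= kap * (t - phi0)) by (apply Rmult_le_pos; unfold kap; lra). lra.
  - assert (zs t <= 0) by (destruct (Req_dec t 1) as [-> | ]; [lra | left; apply Hzn; unfold m in *; lra]).
    assert (kap * (m - phi0) <= kap * (t - phi0)) by (apply Rmult_le_compat_l; unfold kap; lra).
    lra.
Qed.

Lemma left_margin (h q : R -> R) (c phi0 a : R) :
  cont01 h -> cont01 q -> (forall x, 0 < x < 1 -> 0 < q x) -> 0 < a < phi0 -> phi0 < 1 ->
  exists d, 0 < d /\ forall t, a < t <= phi0 -> d * Rabs (h t - c) < q t.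
Proof.
  intros Hh Hq Hqp Ha Hp.
  destruct (cont01_bounded h Hh) as [Mh HMh].
  assert (HHb : forall t, 0 <= t <= 1 -> Rabs (h t - c) <= Mh + Rabs c).
  { intros t Ht. specialize (HMh t). rewrite clamp_id in HMh by lra.
    unfold Rminus. eapply Rle_trans; [apply Rabs_triang|]. rewrite Rabs_Ropp. lra. }
  assert (HHb0 : 0 <= Mh + Rabs c) by (eapply Rle_trans; [apply Rabs_pos | apply (HHb 0); lra]).
  destruct (continuity_ab_min (fun t => q (clamp t)) a phi0 ltac:(lra)) as [mx [Hmx1 Hmx2]].
  { intros t _. apply cont_clamp; auto. }
  assert (Hqmin : forall t, a <= t <= phi0 -> q mx <= q t).
  { intros t Ht. specialize (Hmx1 t Ht). rewrite !clamp_id in Hmx1 by lra. exact Hmx1. }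
  assert (Hqm : 0 < q mx) by (apply Hqp; lra).
  exists (q mx / (2 * (Mh + Rabs c + 1))). split; [apply Rdiv_lt_0_compat; lra|].
  intros t Ht. specialize (HHb t ltac:(lra)). specialize (Hqmin t ltac:(lra)).
  apply Rle_lt_trans with (q mx / (2 * (Mh + Rabs c + 1)) * (Mh + Rabs c + 1)).
  - apply Rmult_le_compat_l; [left; apply Rdiv_lt_0_compat; lra | lra].
  - replace (q mx / (2 * (Mh + Rabs c + 1)) * (Mh + Rabs c + 1)) with (q mx / 2) by (field; lra). lra.
Qed.

Lemma truncation_level (h q : R -> R) (c cs : R) (zs : R -> R) (phi0 a : R) :
  cont01 h -> cont01 q -> (forall x, 0 < x < 1 -> 0 < q x) ->
  ode_sol h q cs zs -> zs 1 = 0 -> cs < c -> 0 < a < phi0 -> phi0 < 1 ->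
  exists del, 0 < del /\
    (forall t, phi0 <= t <= 1 -> zs t - (c - cs) / 2 * (t - phi0) < - del) /\
    (forall t, a < t <= phi0 -> del * Rabs (h t - c) < q t).
Proof.
  intros Hh Hq Hqp Hzs Hzs1 Hc Ha Hp.
  destruct (right_margin h q c cs zs phi0 Hzs Hzs1 Hc ltac:(lra)) as [d1 [Hd1 Hright]].
  destruct (left_margin h q c phi0 a Hh Hq Hqp Ha Hp) as [d2 [Hd2 Hleft]].
  assert (Hm1 := Rmin_l d1 d2). assert (Hm2 := Rmin_r d1 d2).
  exists (Rmin d1 d2). split; [apply Rmin_pos; auto | split].
  - intros t Ht. specialize (Hright t Ht). lra.
  - intros t Ht. specialize (Hleft t Ht).
    assert (Rmin d1 d2 * Rabs (h t - c) <= d2 * Rabs (h t - c)) by (apply Rmult_le_compat_r; [apply Rabs_pos | lra]).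
    lra.
Qed.

(* Solutions on (a, 1) through (phi0, z*(phi0)), obtained from the Picard theorem for
   the truncated field, which they never leave. *)
Lemma local_solution (h q : R -> R) (c cs : R) (zs : R -> R) (phi0 a : R) :
  cont01 h -> cont01 q -> (forall x, 0 < x < 1 -> 0 < q x) -> (forall x, 0 <= x <= 1 -> 0 <= q x) ->
  ode_sol h q cs zs -> zs 1 = 0 -> cs < c -> 0 < a < phi0 -> phi0 < 1 ->
  exists w, (forall t, continuity_pt w t) /\ w phi0 = zs phi0 /\ neg_sol_on h q c a 1 w.
Proof.
  intros Hh Hq Hqp Hq0 Hzs Hzs1 Hc Ha Hp.
  destruct (truncation_level h q c cs zs phi0 a Hh Hq Hqp Hzs Hzs1 Hc Ha Hp)
    as [del [Hdel [Hright Hleft]]].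
  destruct (cont01_bounded h Hh) as [Mh HMh]. destruct (cont01_bounded q Hq) as [Q HQ].
  set (H := fun t => h (clamp t) - c). set (Qf := fun t => q (clamp t)).
  assert (HH : forall t, Rabs (H t) <= Mh + Rabs c).
  { intros t. unfold H, Rminus. eapply Rle_trans; [apply Rabs_triang|]. rewrite Rabs_Ropp.
    specialize (HMh t). lra. }
  assert (HQf : forall t, 0 <= Qf t <= Q).
  { intros t. unfold Qf. split; [apply Hq0, clamp_range|].
    eapply Rle_trans; [apply Rle_abs | apply HQ]. }
  assert (HQ0 : 0 <= Q) by (destruct (HQf 0); lra).
  destruct (picard_exists (truncated_field H Qf del) phi0 (zs phi0)
              (Mh + Rabs c + Q / del) (Q / (del * del) + 1)) as [w [Hwc [Hw0 Hwd]]].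
  - assert (0 <= Q / (del * del)) by (apply Rdiv_le_0_compat; nra). lra.
  - assert (0 <= Q / del) by (apply Rdiv_le_0_compat; lra).
    assert (0 <= Mh + Rabs c) by (eapply Rle_trans; [apply Rabs_pos | apply (HH 0)]). lra.
  - apply truncated_field_cont; [auto | intros t | intros t; apply cont_clamp; auto].
    apply continuity_pt_minus; [apply cont_clamp; auto | apply continuity_pt_const; intros ? ?; auto].
  - apply truncated_field_bounded; auto.
  - apply truncated_field_lipschitz; auto.
  - exists w. split; [auto | split; [auto|]]. intros t Ht.
    assert (Hq0' : forall x, 0 < x < 1 -> 0 <= q x) by (intros x Hx; apply Hq0; lra).
    assert (Hlow : w t < - del).
    { destruct (Rle_or_lt phi0 t).
      - apply (trapped_right h q c cs zs w phi0 a del); auto; lra.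
      - apply (trapped_left h q c cs zs w phi0 a del); auto; lra. }
    split; [lra|]. specialize (Hwd t).
    rewrite truncated_field_agrees in Hwd by lra. unfold H, Qf in Hwd. rewrite clamp_id in Hwd by lra.
    exact Hwd.
Qed.

(* Gluing: local solutions W a on (a, 1), a in (0, phi0), all passing through
   (phi0, z*(phi0)), agree where they overlap and so define one solution on (0, 1),
   extended by 0 at 0; squeezed between z* and 0, it is continuous at 0. *)
Section Gluing.

Variables (h q : R -> R) (c cs : R) (zs : R -> R) (phi0 : R) (W : R -> R -> R).
Hypothesis Hc : cs < c.
Hypothesis Hq : cont01 q.
Hypothesis Hq0 : forall x, 0 < x < 1 -> 0 <= q x.
Hypothesis Hzs : ode_sol h q cs zs.
Hypothesis Hzs0 : zs 0 = 0.
Hypothesis Hp : 0 < phi0 < 1.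
Hypothesis HW : forall a, 0 < a < phi0 ->
  (forall t, continuity_pt (W a) t) /\ W a phi0 = zs phi0 /\ neg_sol_on h q c a 1 (W a).

Lemma glue_consistent a1 a2 t : 0 < a1 < phi0 -> 0 < a2 < phi0 -> Rmax a1 a2 <= t <= 1 ->
  W a1 t = W a2 t.
Proof.
  intros H1 H2 Ht.
  destruct (HW a1 H1) as [C1 [E1 S1]]. destruct (HW a2 H2) as [C2 [E2 S2]].
  assert (Hm1 := Rmax_l a1 a2). assert (Hm2 := Rmax_r a1 a2).
  assert (Hm3 : Rmax a1 a2 < phi0) by (apply Rmax_lub_lt; lra).
  destruct (cont01_bounded q Hq) as [Q HQ].
  assert (Hcont : forall a, (forall t, continuity_pt (W a) t) -> cont_on (W a) (Rmax a1 a2) 1).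
  { intros a Ha. apply cont_on_of_continuous. intros; apply continuity_pt_filterlim; auto. }
  apply (solutions_agree h q c (W a1) (W a2) (Rmax a1 a2) 1 Q phi0);
    [lra | auto | auto | | | | congruence | lra].
  - apply (neg_sol_on_sub h q c a1 1); auto; lra.
  - apply (neg_sol_on_sub h q c a2 1); auto; lra.
  - intros x Hx. split; [apply Hq0; lra|].
    specialize (HQ x). rewrite clamp_id in HQ by lra. eapply Rle_trans; [apply Rle_abs | exact HQ].
Qed.

(* Each x > 0 is covered by the local solution started at anchor x. *)
Let anchor (x : R) : R := Rmin x phi0 / 2.

Lemma anchor_spec x : 0 < x -> 0 < anchor x < phi0 /\ anchor x <= x / 2.
Proof.
  intros Hx. unfold anchor. assert (H1 := Rmin_l x phi0). assert (H2 := Rmin_r x phi0).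
  assert (0 < Rmin x phi0) by (apply Rmin_pos; lra). lra.
Qed.

Let glued (x : R) : R := if Rle_dec x 0 then 0 else W (anchor x) x.

Lemma glued_agrees x t : 0 < x -> 0 < t <= 1 -> anchor x <= t -> glued t = W (anchor x) t.
Proof.
  intros Hx Ht Hat. unfold glued. destruct (Rle_dec t 0) as [|_]; [lra|].
  destruct (anchor_spec x Hx). destruct (anchor_spec t ltac:(lra)).
  apply glue_consistent; auto. split; [|lra]. apply Rmax_lub; lra.
Qed.

Lemma glued_neg_sol : neg_sol_on h q c 0 1 glued.
Proof.
  intros x Hx. destruct (anchor_spec x ltac:(lra)) as [Ha Hax].
  destruct (HW (anchor x) Ha) as [_ [_ Hsol]]. destruct (Hsol x ltac:(lra)) as [Hneg Hd].
  rewrite (glued_agrees x x) by lra. split; auto.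
  apply (is_derive_ext_loc (W (anchor x)) glued); auto.
  assert (Hr : 0 < Rmin (x / 2) (1 - x)) by (apply Rmin_pos; lra).
  exists (mkposreal _ Hr). intros t Ht. change (Rabs (t - x) < Rmin (x / 2) (1 - x)) in Ht.
  assert (H1 := Rmin_l (x / 2) (1 - x)). assert (H2 := Rmin_r (x / 2) (1 - x)).
  apply Rabs_def2 in Ht. symmetry. apply glued_agrees; lra.
Qed.

Lemma glued_phi0 : glued phi0 = zs phi0.
Proof.
  destruct (anchor_spec phi0 ltac:(lra)) as [Ha Hax]. rewrite (glued_agrees phi0 phi0) by lra.
  apply (HW _ Ha).
Qed.

(* ... and is continuous on [0, 1]: at 0 by the squeeze zs < glued < 0, at 1 because it
   coincides with one local solution near 1. *)
Lemma glued_cont : cont01 glued.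
Proof.
  assert (Hzero : glued 0 = 0) by (unfold glued; destruct (Rle_dec 0 0); lra).
  assert (Habove := above_zstar_left h q c cs zs Hc Hq0 Hzs glued phi0 Hp glued_neg_sol glued_phi0).
  apply cont_on_of_eps. intros x Hx eps He.
  destruct (Req_dec x 0) as [-> | Hx0]; [|destruct (Req_dec x 1) as [-> | Hx1]].
  - destruct (cont_on_eps zs 0 1 0 (proj1 Hzs) ltac:(lra) eps He) as [d [Hd Hd2]].
    exists (Rmin d phi0). split; [apply Rmin_pos; lra|]. intros y Hy Hyd.
    assert (H1 := Rmin_l d phi0). assert (H2 := Rmin_r d phi0).
    rewrite Hzero, Rminus_0_r. rewrite Rminus_0_r in Hyd.
    destruct (Req_dec y 0) as [-> | Hy0]; [rewrite Hzero, Rabs_R0; lra|].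
    rewrite Rabs_pos_eq in Hyd by lra.
    specialize (Hd2 y Hy ltac:(rewrite Rminus_0_r, Rabs_pos_eq; lra)).
    rewrite Hzs0, Rminus_0_r in Hd2.
    specialize (Habove y ltac:(lra)). destruct (glued_neg_sol y ltac:(lra)) as [Hneg _].
    apply Rabs_def2 in Hd2. apply Rabs_def1; lra.
  - destruct (anchor_spec 1 ltac:(lra)) as [Ha Hax]. destruct (HW _ Ha) as [C _].
    destruct (continuity_pt_eps _ 1 (C 1) eps He) as [d [Hd Hd2]].
    exists (Rmin d (1 / 2)). split; [apply Rmin_pos; lra|]. intros y Hy Hyd.
    assert (H1 := Rmin_l d (1 / 2)). assert (H2 := Rmin_r d (1 / 2)).
    apply Rabs_def2 in Hyd.
    rewrite (glued_agrees 1 y), (glued_agrees 1 1) by lra. apply Hd2. apply Rabs_def1; lra.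
  - destruct (glued_neg_sol x ltac:(lra)) as [_ Hd].
    destruct (continuity_pt_eps glued x (derive_continuity_pt _ _ _ Hd) eps He) as [d [Hd0 Hd2]].
    exists d. split; auto.
Qed.

Lemma glued_solution : exists z, ode_sol h q c z /\ z phi0 = zs phi0.
Proof.
  exists glued. split; [|apply glued_phi0].
  split; [apply glued_cont | split]; intros x Hx; apply glued_neg_sol; auto.
Qed.

End Gluing.

Lemma solution_through_zstar (h q : R -> R) (c cs : R) (zs : R -> R) (phi0 : R) :
  cont01 h -> cont01 q -> (forall x, 0 < x < 1 -> 0 < q x) -> (forall x, 0 <= x <= 1 -> 0 <= q x) ->
  ode_sol h q cs zs -> zs 0 = 0 -> zs 1 = 0 -> cs < c -> 0 < phi0 < 1 ->
  exists z, ode_sol h q c z /\ z phi0 = zs phi0.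
Proof.
  intros Hh Hq Hqp Hq0 Hzs Hzs0 Hzs1 Hc Hp.
  set (Local := fun a (w : R -> R) => 0 < a < phi0 ->
         (forall t, continuity_pt w t) /\ w phi0 = zs phi0 /\ neg_sol_on h q c a 1 w).
  assert (Hex : forall a, exists w, Local a w).
  { intros a. destruct (classic (0 < a < phi0)) as [Ha | Ha].
    - destruct (local_solution h q c cs zs phi0 a Hh Hq Hqp Hq0 Hzs Hzs1 Hc Ha (proj2 Hp)) as [w Hw].
      exists w; intros _; exact Hw.
    - exists (fun _ => 0). intros H; contradiction. }
  set (W := fun a => proj1_sig (constructive_indefinite_description _ (Hex a))).
  apply (glued_solution h q c cs zs phi0 W); auto.
  - intros x Hx. apply Hq0; lra.
  - intros a. exact (proj2_sig (constructive_indefinite_description _ (Hex a))).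
Qed.

(* Solutions of the problem are totally ordered: if z < w at one point y of (0, 1), then
   z < w on all of (0, 1].  To the right the gap widens; to the left a crossing would
   reverse the order at y, and a touching point is excluded by uniqueness. *)
Lemma solutions_ordered (h q : R -> R) (c : R) (z w : R -> R) (y : R) :
  cont01 q -> (forall x, 0 < x < 1 -> 0 <= q x) ->
  ode_sol h q c z -> ode_sol h q c w -> 0 < y < 1 -> z y < w y ->
  forall x, 0 < x <= 1 -> z x < w x.
Proof.
  intros Hq Hq0 Hz Hw Hy Hzw x Hx.
  assert (Hsub : forall u, ode_sol h q c u -> forall a b, 0 <= a -> b <= 1 ->
            cont_on u a b /\ neg_sol_on h q c a b u).
  { intros u Hu a b Ha Hb. split; [apply (cont_on_sub u 0 1); auto; apply Hu|].
    apply (neg_sol_on_sub h q c 0 1); auto using ode_sol_neg_sol. }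
  destruct (Rlt_or_le y x) as [Hyx | Hxy].
  - destruct (Hsub z Hz y x) as [Cz Sz]; try lra. destruct (Hsub w Hw y x) as [Cw Sw]; try lra.
    assert (z x - w x <= z y - w y); [|lra].
    apply (gap_widens h q c z w y x); auto. intros t Ht. apply Hq0. lra.
  - destruct (Rle_lt_or_eq_dec _ _ Hxy) as [Hlt | ->]; [|auto].
    apply Rnot_le_lt. intros Hle. destruct (Rle_lt_or_eq_dec _ _ Hle) as [Hwz | Heq].
    + destruct (Hsub z Hz x y) as [Cz Sz]; try lra. destruct (Hsub w Hw x y) as [Cw Sw]; try lra.
      assert (w y - z y <= w x - z x); [|lra].
      apply (gap_widens h q c w z x y); auto. intros t Ht. apply Hq0. lra.
    + assert (z y = w y); [|lra].
      apply (ode_sol_unique h q c z w x); auto; lra.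
Qed.

Lemma above_lowest_solution (h q : R -> R) (c beta : R) (zb z : R -> R) :
  cont01 q -> (forall x, 0 < x < 1 -> 0 <= q x) ->
  ode_sol h q c zb -> zb 1 = beta -> ode_sol h q c z -> beta <= z 1 ->
  forall x, 0 < x <= 1 -> zb x <= z x.
Proof.
  intros Hq Hq0 Hzb Hzb1 Hz Hbz x Hx. apply Rnot_lt_le. intros Hlt.
  assert (z 1 < zb 1); [|lra].
  destruct (Req_dec x 1) as [-> | Hx1]; [auto|].
  apply (solutions_ordered h q c z zb x); [auto | auto | auto | auto | lra | auto | lra].
Qed.

Theorem lemma8p1
  (f h q : R -> R) (c cs : R) (zs : R -> R) (beta : R) (zb : R -> R)
  (* f in C^1[0,1], f(0) = 0, h = f' *)
  (Hf : cont01 f) (Hh : cont01 h)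
  (Hfd : forall x, 0 < x < 1 -> is_derive f x (h x))
  (Hf0 : f 0 = 0)
  (Hq : cond_q q)
  (* c* : (P_c') has a solution with z(1)=0 iff c' >= c* *)
  (Hcs : forall c', (exists z, solP h q c' z /\ z 1 = 0) <-> cs <= c')
  (* z* : the solution of (P_{c*}) with z(1)=0 *)
  (Hzs : solP h q cs zs) (Hzs1 : zs 1 = 0)
  (Hc : cs < c)
  (* beta(c) < 0: for b<0, (P_c) has a solution with z(1)=b iff b >= beta(c) *)
  (Hbeta : beta < 0)
  (Hbeta' : forall b, b < 0 -> ((exists z, solP h q c z /\ z 1 = b) <-> beta <= b))
  (* z_beta *)
  (Hzb : solP h q c zb) (Hzb1 : zb 1 = beta) :
  (forall phi0, 0 < phi0 < 1 ->
     exists z, (ode_sol h q c z /\ z phi0 = zs phi0) /\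
       forall w, ode_sol h q c w -> w phi0 = zs phi0 ->
         forall x, 0 <= x <= 1 -> w x = z x)
  /\
  (forall phi0 z, 0 < phi0 < 1 -> ode_sol h q c z -> z phi0 = zs phi0 ->
     z 0 = 0 /\
     (forall x, phi0 < x <= 1 -> z x < zs x) /\
     (forall x, 0 < x <= 1 -> zb x <= z x))
  /\
  (forall phi1 phi0 z1 z0, 0 < phi1 -> phi1 < phi0 -> phi0 < 1 ->
     ode_sol h q c z1 -> z1 phi1 = zs phi1 ->
     ode_sol h q c z0 -> z0 phi0 = zs phi0 ->
     forall x, 0 < x <= 1 -> z1 x < z0 x).
Proof.
  destruct Hq as [Hqc [Hqp [Hq0 [Hq1 _]]]].
  assert (Hqnn : forall x, 0 <= x <= 1 -> 0 <= q x).
  { intros x Hx. destruct (Req_dec x 0) as [-> | ]; [lra|].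
    destruct (Req_dec x 1) as [-> | ]; [lra | left; apply Hqp; lra]. }
  assert (Hqnn' : forall x, 0 < x < 1 -> 0 <= q x) by (intros x Hx; apply Hqnn; lra).
  destruct Hzs as [Hzs Hzs0].
  split; [|split].
  - intros phi0 Hp.
    destruct (solution_through_zstar h q c cs zs phi0) as [z [Hz Hzp]]; auto.
    exists z. split; [auto|]. intros w Hw Hwp x Hx.
    apply (ode_sol_unique h q c w z phi0); auto. congruence.
  - intros phi0 z Hp Hz Hzp.
    assert (Hz0 : z 0 = 0) by (apply (vanishes_at_0 h q c cs zs Hc Hqnn' Hzs z phi0); auto).
    assert (Hbelow := below_zstar_right h q c cs zs Hc Hqnn' Hzs z phi0 Hp Hz Hzp).
    split; [exact Hz0 | split; [exact Hbelow |]].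
    assert (Hz1 : z 1 < 0) by (specialize (Hbelow 1 ltac:(lra)); lra).
    apply (above_lowest_solution h q c beta zb z); auto; [apply Hzb|].
    apply (Hbeta' (z 1) Hz1). exists z. split; [split |]; auto.
  - intros phi1 phi0 z1 z0 H1 H2 H3 Hz1 Hz1p Hz0 Hz0p.
    apply (solutions_ordered h q c z1 z0 phi0); auto; [lra|].
    rewrite Hz0p. apply (below_zstar_right h q c cs zs Hc Hqnn' Hzs z1 phi1); auto; lra.
Qed.
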